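(* Let $n=p_1^{\alpha_1}p_2^{\alpha_2}\cdots p_t^{\alpha_t}$ with primes $p_1<\cdots<p_t$, $t\ge1$, and all $\alpha_i\ge1$. Then $$\mathrm{IR}(X_n)\le\left(1+2\cdot\frac{p_1}{p_t}\cdot\frac{1}{p_1^{\alpha_1-1}p_2^{\alpha_2-1}\cdots p_t^{\alpha_t-1}}\right)\alpha(X_n).$$
   Context: $X_n$ is the graph on $\{0,\dots,n-1\}$ with $a,b$ adjacent iff $\gcd(a-b,n)=1$. $\alpha(G)$ is the independence number. A set $S$ is irredundant if every $v\in S$ has a private neighbor, i.e. a vertex in $N[v]\setminus N[S\setminus\{v\}]$ (closed neighborhoods); $\mathrm{IR}(G)$ is the maximum size of an irredundant set. *)

From HB Require Import structures.
From mathcomp Require Import all_boot all_order all_algebra.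
Set Implicit Arguments. Unset Strict Implicit. Unset Printing Implicit Defensive.

(* The unitary Cayley graph X_n on {0,...,n-1}: a ~ b iff gcd(a-b, n) = 1.
   |a - b| is computed as maxn a b - minn a b; gcd with n is sign-invariant. *)
Definition Xadj (n : nat) (a b : 'I_n) : bool :=
  coprime (maxn a b - minn a b) n.

Definition cnbhd (n : nat) (v : 'I_n) : {set 'I_n} :=
  [set u | (u == v) || Xadj v u].

Definition cnbhdS (n : nat) (S : {set 'I_n}) : {set 'I_n} :=
  \bigcup_(v in S) cnbhd v.

Definition independent (n : nat) (S : {set 'I_n}) : bool :=
  [forall u in S, forall v in S, ~~ Xadj u v].

Definition irredundant (n : nat) (S : {set 'I_n}) : bool :=
  [forall v in S, exists u, (u \in cnbhd v) && (u \notin cnbhdS (S :\ v))].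

Definition alphaX (n : nat) : nat :=
  \max_(S : {set 'I_n} | independent S) #|S|.

Definition IRX (n : nat) : nat :=
  \max_(S : {set 'I_n} | irredundant S) #|S|.

From HB Require Import structures.
From mathcomp Require Import all_boot all_order all_algebra.
From mathcomp Require Import ring.
Import Order.TTheory GRing.Theory Num.Theory.

Set Implicit Arguments. Unset Strict Implicit. Unset Printing Implicit Defensive.

(* Two vertices of X_n are adjacent iff they differ modulo every prime
   divisor of n, so vertices congruent modulo rad(n) have the same
   neighbourhood.  Split an irredundant set S into the vertices with no
   neighbour in S, which form an independent set, and the others.  A private
   neighbour w of a non-isolated a in S is distinct from a; every other
   u in S congruent to a modulo L = rad(n)/p_t is non-adjacent to w, so it
   agrees with w modulo p_t, hence two such u would agree modulo rad(n) and
   one of them would have no private neighbour.  Thus each residue class modulo L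
   holds at most two non-isolated vertices of S, so
   IR(X_n) <= alpha(X_n) + 2L, and the multiples of p_1 give
   alpha(X_n) >= n/p_1 = L p_t p_1^(alpha_1-1)...p_t^(alpha_t-1) / p_1. *)

Lemma dvdn_dist_mod q x y : (q %| maxn x y - minn x y) = (x == y %[mod q]).
Proof.
by case: (leqP x y) => [le_xy|/ltnW le_yx]; rewrite -eqn_mod_dvd // eq_sym.
Qed.

Definition has_nbr_in n (S : {set 'I_n}) (v : 'I_n) := [exists x in S, Xadj v x].

Definition rad_drop_max n := \prod_(q <- primes n | q != max_pdiv n) q.

Section UnitaryCayleyGraph.

Variable n : nat.
Hypothesis n_gt1 : 1 < n.

Implicit Types (x y u v w : 'I_n) (S : {set 'I_n}).

Lemma XadjC x y : Xadj x y = Xadj y x.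
Proof. by rewrite /Xadj maxnC minnC. Qed.

Lemma Xadjnn x : Xadj x x = false.
Proof. by rewrite /Xadj maxnn minnn subnn /coprime gcd0n gtn_eqF. Qed.

Lemma XadjP x y :
  reflect (forall q, prime q -> q %| n -> x != y %[mod q]) (Xadj x y).
Proof.
rewrite /Xadj /coprime; set g := gcdn _ n.
have g_gt0 : 0 < g by rewrite gcdn_gt0 (ltnW n_gt1) orbT.
apply: (iffP eqP) => [g1 q q_pr q_dvd | sep].
  rewrite -dvdn_dist_mod; apply: contraL q_pr => q_dist.
  have : q %| g by rewrite dvdn_gcd q_dist q_dvd.
  by rewrite g1 dvdn1 => /eqP ->.
apply/eqP; rewrite eqn_leq g_gt0 andbT leqNgt; apply/negP => g_gt1.
have pdiv_g_dvd := dvdn_trans (pdiv_dvd g).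
have := sep _ (pdiv_prime g_gt1) (pdiv_g_dvd _ (dvdn_gcdr _ _)).
by rewrite -dvdn_dist_mod pdiv_g_dvd ?dvdn_gcdl.
Qed.

Lemma Xadj_eq_mod_primes x y w :
  (forall q, prime q -> q %| n -> x = y %[mod q]) -> Xadj x w = Xadj y w.
Proof.
move=> eq_xy; apply/XadjP/XadjP => sep q q_pr q_dvd; have := sep q q_pr q_dvd;
  by rewrite eq_xy.
Qed.

Lemma independent_no_nbr_in S : independent [set v in S | ~~ has_nbr_in S v].
Proof.
apply/forall_inP => u; rewrite inE => /andP[_ u_isol].
apply/forall_inP => v; rewrite inE => /andP[v_in _].
by apply: contra u_isol => uv; apply/existsP; exists v; rewrite v_in.
Qed.

Lemma irredundant_private_nbr S v x :
  irredundant S -> v \in S -> x \in S -> Xadj v x ->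
  exists2 w, Xadj v w & forall u, u \in S -> u != v -> ~~ Xadj u w.
Proof.
move=> /forall_inP irr v_in x_in vx.
have [w /andP[w_nbr w_priv]] := existsP (irr v v_in).
have not_nbr u : u \in S -> u != v -> (w != u) && ~~ Xadj u w.
  move=> u_in uv; rewrite -negb_or; apply: contra w_priv => wu.
  by apply/bigcupP; exists u; rewrite ?inE ?uv.
exists w => [|u u_in uv]; last by case/andP: (not_nbr u u_in uv).
have xv : x != v by apply: contraTneq vx => ->; rewrite Xadjnn.
move: w_nbr; rewrite inE => /orP[/eqP w_v|//].
by case/andP: (not_nbr x x_in xv) => _; rewrite w_v XadjC vx.
Qed.

Lemma irredundant_no_twins S u v :
  irredundant S -> u \in S -> v \in S -> u != v -> has_nbr_in S v ->
  ~ (forall q, prime q -> q %| n -> u = v %[mod q]).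
Proof.
move=> irr u_in v_in uv /existsP[x /andP[x_in vx]] twins.
have [w vw w_priv] := irredundant_private_nbr irr v_in x_in vx.
by have := w_priv u u_in uv; rewrite (Xadj_eq_mod_primes w twins) vw.
Qed.

Lemma rad_drop_max_gt0 : 0 < rad_drop_max n.
Proof.
rewrite /rad_drop_max big_seq_cond prodn_cond_gt0 // => q /andP[q_in _].
by move: q_in; rewrite mem_primes => /andP[/prime_gt0].
Qed.

Lemma eq_mod_rad_drop_max q x y :
  prime q -> q %| n -> q != max_pdiv n ->
  x = y %[mod rad_drop_max n] -> x = y %[mod q].
Proof.
move=> q_pr q_dvd q_max eq_xy.
have q_in : q \in primes n by rewrite mem_primes q_pr (ltnW n_gt1).
have q_rad : q %| rad_drop_max n.
  rewrite /rad_drop_max -big_filter (bigD1_seq q) ?dvdn_mulr //.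
    by rewrite mem_filter q_max.
  by rewrite filter_uniq // primes_uniq.
by rewrite -(modn_dvdm x q_rad) eq_xy modn_dvdm.
Qed.

Lemma irredundant_no_three_congr S a b c :
  irredundant S -> a \in S -> b \in S -> c \in S ->
  has_nbr_in S a -> has_nbr_in S c -> [/\ a != b, b != c & c != a] ->
  b = a %[mod rad_drop_max n] -> c = a %[mod rad_drop_max n] -> False.
Proof.
move=> irr a_in b_in c_in /existsP[x /andP[x_in ax]] c_nbr [ab bc ca] eq_ba eq_ca.
have [w aw w_priv] := irredundant_private_nbr irr a_in x_in ax.
have eq_max u : u \in S -> u != a -> u = a %[mod rad_drop_max n] ->
    u = w %[mod max_pdiv n].
  move=> u_in ua eq_ua; apply/eqP; move: (w_priv u u_in ua); apply: contraR.
  move=> neq_max; apply/XadjP => q q_pr q_dvd.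
  have [-> //|q_max] := eqVneq q (max_pdiv n).
  rewrite (eq_mod_rad_drop_max q_pr q_dvd q_max eq_ua).
  exact: (elimT (XadjP _ _) aw).
apply: (irredundant_no_twins irr b_in c_in bc c_nbr) => q q_pr q_dvd.
have [->|q_max] := eqVneq q (max_pdiv n).
  by rewrite (eq_max b) ?(eq_max c) // eq_sym.
by apply: (eq_mod_rad_drop_max q_pr q_dvd q_max); rewrite eq_ba eq_ca.
Qed.

Lemma card_has_nbr_in_irredundant S :
  irredundant S -> #|[set v in S | has_nbr_in S v]| <= 2 * rad_drop_max n.
Proof.
move=> irr; set A := [set v in S | _]; set L := rad_drop_max n.
pose residue v : 'I_L := Ordinal (ltn_pmod v rad_drop_max_gt0).
have fiber_le2 r : #|[set v in A | residue v == r]| <= 2.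
  rewrite leqNgt; apply/card_gt2P => -[a [b [c [[]]]]].
  rewrite !inE => /andP[/andP[a_in a_nbr] /eqP ra] /andP[/andP[b_in _] /eqP rb].
  move=> /andP[/andP[c_in c_nbr] /eqP rc] distinct.
  apply: (irredundant_no_three_congr irr a_in b_in c_in a_nbr c_nbr distinct).
    by rewrite -[_ %% L]/(val (residue b)) rb -ra.
  by rewrite -[_ %% L]/(val (residue c)) rc -ra.
rewrite -sum1_card (partition_big residue predT) //=.
apply: (@leq_trans (\sum_(r < L) 2)); last by rewrite sum_nat_const card_ord mulnC.
apply: leq_sum => r _; rewrite sum1_card (leq_trans _ (fiber_le2 r)) //.
by apply/eq_leq/eq_card => v; rewrite inE.
Qed.

Lemma IRX_le_alphaX_add : IRX n <= alphaX n + 2 * rad_drop_max n.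
Proof.
apply/bigmax_leqP => S irr.
rewrite -(cardsID [set v | has_nbr_in S v] S) addnC leq_add //.
  apply: leq_trans (leq_bigmax_cond _ (independent_no_nbr_in S)).
  by apply/eq_leq/eq_card => v; rewrite !inE andbC.
rewrite (leq_trans _ (card_has_nbr_in_irredundant irr)) //.
by apply/eq_leq/eq_card => v; rewrite !inE andbC.
Qed.

Lemma leq_n_mul_alphaX p : prime p -> p %| n -> n <= p * alphaX n.
Proof.
move=> p_pr p_dvd; have p_gt0 := prime_gt0 p_pr.
have n_eq : n = n %/ p * p by rewrite divnK.
have mult_lt (i : 'I_(n %/ p)) : i * p < n by rewrite [X in _ < X]n_eq ltn_pmul2r.
pose mult i := Ordinal (mult_lt i).
have mult_inj : injective mult.
  by move=> i j /(congr1 val)/eqP; rewrite /= eqn_pmul2r // => /eqP/val_inj.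
have indep : independent [set mult i | i in 'I_(n %/ p)].
  apply/forall_inP => _ /imsetP[i _ ->]; apply/forall_inP => _ /imsetP[j _ ->].
  by apply/negP => /XadjP/(_ p p_pr p_dvd); rewrite !modnMl.
rewrite [X in X <= _]n_eq mulnC leq_pmul2l //.
apply: leq_trans (leq_bigmax_cond _ indep).
by rewrite card_imset // card_ord.
Qed.

Lemma rad_drop_max_mul_max_pdiv :
  n = rad_drop_max n * max_pdiv n * \prod_(p <- primes n) p ^ (logn p n).-1.
Proof.
have n_gt0 := ltnW n_gt1.
have max_in : max_pdiv n \in primes n.
  by rewrite mem_primes max_pdiv_prime // n_gt0 max_pdiv_dvd.
rewrite [LHS](prod_prime_decomp n_gt0) prime_decompE big_map /=.
rewrite (eq_big_seq (fun p => p * p ^ (logn p n).-1)); last first.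
  by move=> p p_in; rewrite -expnS prednK // logn_gt0.
rewrite big_split /= (bigD1_seq _ max_in (primes_uniq n)) /= -/(rad_drop_max n).
by rewrite [max_pdiv n * _]mulnC.
Qed.

End UnitaryCayleyGraph.

Local Open Scope ring_scope.

Theorem corollary5p5 (n : nat) (hn : (1 < n)%N) :
  (IRX n)%:R <=
    (1 + 2 * ((pdiv n)%:R / (max_pdiv n)%:R)
           * ((\prod_(p <- primes n) p ^ (logn p n).-1)%N%:R)^-1)
    * (alphaX n)%:R :> rat.
Proof.
set M := (\prod_(p <- primes n) _)%N.
have n_eq := rad_drop_max_mul_max_pdiv hn; rewrite -/M in n_eq.
have := ltnW hn; rewrite {1}n_eq !muln_gt0 => /andP[/andP[_ P_gt0] M_gt0].
have two_n : (2 * rad_drop_max n * (max_pdiv n * M) = 2 * n)%N.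
  by rewrite [in RHS]n_eq !mulnA.
apply: (@le_trans _ _ (alphaX n + 2 * rad_drop_max n)%N%:R).
  by rewrite ler_nat IRX_le_alphaX_add.
rewrite natrD mulrDl mul1r lerD2l.
have -> : 2 * ((pdiv n)%:R / (max_pdiv n)%:R) * M%:R^-1 * (alphaX n)%:R
    = (2 * (pdiv n * alphaX n))%N%:R / (max_pdiv n * M)%N%:R :> rat.
  by rewrite !natrM; field; rewrite !pnatr_eq0 -!lt0n M_gt0.
rewrite ler_pdivlMr ?ltr0n ?muln_gt0 ?P_gt0 // -natrM ler_nat two_n leq_pmul2l //.
by rewrite leq_n_mul_alphaX ?pdiv_prime ?pdiv_dvd.
Qed.
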